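(* Let $G$ be a crown-free linear $3$-graph on $n$ vertices, and let $s$ be the number of vertices of $G$ of degree at least $6$. Then the number of edges of $G$ satisfies $$|E(G)| \leq \frac{3(n-s)}{2}.$$
   Context: A linear $3$-graph $G=(V,E)$ consists of a finite vertex set $V$ and a collection $E$ of $3$-element subsets of $V$ (edges) such that any two distinct edges share at most one vertex. The degree $d(v)$ of a vertex $v$ is the number of edges containing $v$. The crown $C_{13}$ is the linear $3$-graph on $9$ vertices $\{a,b,c,d,e,f,g,h,i\}$ with edges $\{a,b,c\},\{a,d,e\},\{b,f,g\},\{c,h,i\}$. A linear $3$-graph is crown-free if it contains no copy of $C_{13}$, i.e. no four of its edges together with an injective assignment of the nine vertices form the crown. *)

From mathcomp Require Import all_boot.
Set Implicit Arguments. Unset Strict Implicit. Unset Printing Implicit Defensive.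

Definition is_linear_3graph (V : finType) (E : {set {set V}}) : Prop :=
  (forall e, e \in E -> #|e| = 3) /\
  (forall e1 e2, e1 \in E -> e2 \in E -> e1 != e2 -> #|e1 :&: e2| <= 1).

Definition degree (V : finType) (E : {set {set V}}) (v : V) : nat :=
  #|[set e in E | v \in e]|.

Definition has_crown (V : finType) (E : {set {set V}}) : Prop :=
  exists a b c d e f g h i : V,
    uniq [:: a; b; c; d; e; f; g; h; i] /\
    [set a; b; c] \in E /\ [set a; d; e] \in E /\
    [set b; f; g] \in E /\ [set c; h; i] \in E.

Definition crown_free (V : finType) (E : {set {set V}}) : Prop :=
  ~ has_crown E.

From mathcomp Require Import all_boot.
Set Implicit Arguments. Unset Strict Implicit. Unset Printing Implicit Defensive.
Set Bullet Behavior "Strict Subproofs".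

(* Discharging.  A vertex of degree d <= 5 sends 180/d to each of its edges, except that a
   vertex of degree 5 sends 60 to a special edge (one whose other two vertices have degrees 5
   and 4 or 5) and 30 to its other edges; vertices of degree >= 6 send nothing.  Crown-freeness
   gives two facts.  First, no edge has vertices of degrees >= 2, >= 4 and >= 6: legs at its
   three vertices could be chosen greedily pairwise disjoint, producing a crown.  This forces
   every edge to receive at least 120.  Second, a vertex of degree 5 lies on at most one
   special edge, so that every vertex sends at most 180: two special edges would force a Fano
   plane minus a line whose degrees are again incompatible with crown-freeness.  Hence
   120 |E| <= 180 (n - s). *)

Section ThreeSets.
Variable T : finType.
Implicit Types (f : {set T}) (u v w : T).

Lemma set3_eq f u v w : #|f| = 3 -> u \in f -> v \in f -> w \in f ->
  u != v -> u != w -> v != w -> f = [set u; v; w].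
Proof.
move=> f3 uf vf wf uv uw vw; apply/esym/eqP; rewrite eqEcard f3.
have -> : #|[set u; v; w]| = 3.
  by rewrite -setUA !cardsU1 cards1 !inE negb_or uv uw vw.
by rewrite andbT; apply/subsetP=> z; rewrite !inE => /orP[/orP[]|] /eqP->.
Qed.

Lemma set3C u v w : [set u; v; w] = [set v; u; w].
Proof. by rewrite [[set u; v]]setUC. Qed.

Lemma set3_rotl u v w : [set u; v; w] = [set v; w; u].
Proof. by rewrite -setUA setUC. Qed.

Lemma card3_set2 f u v : #|f| = 3 -> u \in f -> v \in f -> u != v ->
  exists w, [/\ f = [set u; v; w], u != w & v != w].
Proof.
move=> f3 uf vf uv.
have : 0 < #|f :\: [set u; v]|.
  rewrite cardsD f3 (setIidPr _) ?cards2 ?uv //.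
  by apply/subsetP=> z; rewrite !inE => /orP[]/eqP->.
case/card_gt0P=> w; rewrite !inE negb_or => /andP[/andP[wu wv] wf].
by exists w; rewrite !(eq_sym _ w) wu wv (set3_eq f3 uf vf wf) // eq_sym.
Qed.

Lemma card3_set1 f u : #|f| = 3 -> u \in f ->
  exists v w, [/\ f = [set u; v; w], u != v, u != w & v != w].
Proof.
move=> f3 uf.
have : 0 < #|f :\ u| by rewrite cardsD f3 (setIidPr _) ?cards1 // sub1set.
case/card_gt0P=> v; rewrite !inE => /andP[vu vf].
have uv : u != v by rewrite eq_sym.
by have [w [-> uw vw]] := card3_set2 f3 uf vf uv; exists v, w.
Qed.

Lemma disjoint_neq (A B : {set T}) u v : [disjoint A & B] -> u \in A -> v \in B -> u != v.
Proof. by move=> dAB uA; apply: contraTneq => <-; rewrite (disjointFr dAB uA). Qed.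

Lemma not_disjointP (A B : {set T}) : ~~ [disjoint A & B] -> exists2 z, z \in A & z \in B.
Proof. by rewrite -setI_eq0 => /set0Pn[z]; rewrite inE => /andP[]; exists z. Qed.

Lemma disjoint_set3 (A : {set T}) u v w :
  u \notin A -> v \notin A -> w \notin A -> [disjoint A & [set u; v; w]].
Proof.
move=> uA vA wA; rewrite -setI_eq0; apply/eqP/setP=> z; rewrite !inE.
apply/negbTE; apply/andP=> -[zA /orP[/orP[]|]] /eqP ez; move: zA; rewrite ez.
- exact/negP.
- exact/negP.
- exact/negP.
Qed.

Lemma leq_card_set2 u v : #|[set u; v]| <= 2.
Proof. by rewrite cards2; case: (u != v). Qed.

Lemma leq_card_set3 u v w : #|[set u; v; w]| <= 3.
Proof. by rewrite -setUA cardsU1 cards2; case: (u \notin _); case: (v != w). Qed.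

End ThreeSets.


Definition heavy (a b c : nat) : bool := [&& 2 <= a, 4 <= b & 6 <= c].

Definition charge (d : nat) (special : bool) : nat :=
  match d with
  | 1 => 180 | 2 => 90 | 3 => 60 | 4 => 45
  | 5 => if special then 60 else 30
  | _ => 0
  end.

Definition special (du dw : nat) : bool :=
  ((du == 5) && (4 <= dw <= 5)) || ((dw == 5) && (4 <= du <= 5)).

Lemma charge_sum_ge a b c : 0 < a -> 0 < b -> 0 < c ->
  ~~ heavy a b c -> ~~ heavy a c b -> ~~ heavy b a c ->
  ~~ heavy b c a -> ~~ heavy c a b -> ~~ heavy c b a ->
  120 <= charge a (special b c) + charge b (special a c) + charge c (special a b).
Proof.
(* All degrees >= 6 behave alike, so the case analysis stops at 6. *)
by case: a b c => [|[|[|[|[|[|a]]]]]] [|[|[|[|[|[|b]]]]]] [|[|[|[|[|[|c]]]]]].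
Qed.

Ltac mem := by rewrite ?inE ?eqxx ?orbT.

Section LinearHypergraph.

Variables (V : finType) (E : {set {set V}}).
Hypothesis linE : is_linear_3graph E.

Definition edges_at (v : V) : {set {set V}} := [set f in E | v \in f].

Local Notation deg := (degree E).

Lemma card_edge f : f \in E -> #|f| = 3.
Proof. exact: linE.1. Qed.

Lemma edge_eq f g u v : f \in E -> g \in E ->
  u \in f -> v \in f -> u \in g -> v \in g -> u != v -> f = g.
Proof.
move=> fE gE uf vf ug vg uv; apply/eqP/negPn/negP => /(linE.2 f g fE gE).
by apply/negP; rewrite -ltnNge; apply/card_gt1P; exists u, v; rewrite !inE uf vf ug vg.
Qed.

Lemma edge_set3_neq u v w : [set u; v; w] \in E -> [/\ u != v, u != w & v != w].
Proof.
move/card_edge; rewrite -setUA !cardsU1 cards1 !inE negb_or.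
by case: (u == v); case: (u == w); case: (v == w).
Qed.

Lemma edge_notin f g u v : f \in E -> g \in E -> f != g ->
  u \in f -> u \in g -> v \in g -> u != v -> v \notin f.
Proof.
move=> fE gE fg uf ug vg uv; apply: contra fg => vf.
by apply/eqP; apply: (edge_eq fE gE uf vf ug vg uv).
Qed.

Lemma edge_notin_third g f u v w : g \in E -> f \in E ->
  u \in g -> v \in g -> w \in g -> w != u -> u \in f -> v \notin f -> w \notin f.
Proof.
move=> gE fE ug vg wg wu uf; apply: contra => wf.
by rewrite (edge_eq fE gE uf wf ug wg) // eq_sym.
Qed.

Lemma card_edgeD1 f v : f \in E -> v \in f -> #|f :\ v| = 2.
Proof. by move=> fE vf; move: (cardsD1 v f); rewrite vf card_edge // => -[]. Qed.

Lemma degree_gt0 f v : f \in E -> v \in f -> 0 < deg v.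
Proof. by move=> fE vf; apply/card_gt0P; exists f; rewrite inE fE vf. Qed.

Lemma in_edges_atD v (X : {set {set V}}) f :
  f \in edges_at v :\: X -> [/\ f \in E, v \in f & f \notin X].
Proof. by rewrite !inE => /andP[-> /andP[-> ->]]. Qed.

Lemma edges_atD_notin v (X : {set {set V}}) f g z :
  f \in edges_at v :\: X -> g \in X -> g \in E -> v \in g -> z \in g -> z != v ->
  z \notin f.
Proof.
move=> /in_edges_atD[fE vf fX] gX gE vg zg zv.
by apply: (edge_notin fE gE _ vf vg zg); [apply: contraNneq fX => -> | rewrite eq_sym].
Qed.

Lemma leq_degree_edges_atD v (X : {set {set V}}) : deg v - #|X| <= #|edges_at v :\: X|.
Proof. by rewrite cardsD leq_sub2l // subset_leq_card // subsetIr. Qed.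

Lemma ltn_card_edges_atD v (X : {set {set V}}) n k :
  #|X| <= k -> n + k < deg v -> n < #|edges_at v :\: X|.
Proof.
move=> Xk nk; apply: leq_trans (leq_degree_edges_atD _ _).
by rewrite ltn_subRL addnC; apply: leq_ltn_trans nk; rewrite leq_add2l.
Qed.

(* Each edge of F meeting Z picks a point of Z, which lies in S; by linearity distinct edges
   through v pick distinct points. *)
Lemma exists_edge_avoiding v (F : {set {set V}}) (Z S : {set V}) :
  F \subset edges_at v -> v \notin Z ->
  (forall f z, f \in F -> z \in Z -> z \in f -> z \in S) -> #|S| < #|F| ->
  exists2 f, f \in F & [disjoint f & Z].
Proof.
move=> FE vZ ZS ltSF.
have [/exists_inP[f fF fZ] | ] := boolP [exists f in F, [disjoint f & Z]]; first by exists f.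
rewrite negb_exists_in => /forall_inP meetZ.
pose pt f := odflt v [pick z in f :&: Z].
have ptP f : f \in F -> pt f \in f :&: Z.
  move=> fF; rewrite /pt; case: pickP => [z //|none].
  have [z zfZ] : exists z, z \in f :&: Z by apply/set0Pn; rewrite setI_eq0; exact: meetZ.
  by move: (none z); rewrite zfZ.
have pt_inj : {in F &, injective pt}.
  move=> f g fF gF ptfg.
  move: (subsetP FE f fF) (subsetP FE g gF); rewrite !inE => /andP[fE vf] /andP[gE vg].
  move: (ptP f fF) (ptP g gF); rewrite !inE ptfg => /andP[pf pZ] /andP[pg _].
  by apply: (edge_eq fE gE vf pf vg pg); apply: contraNneq vZ => ->.
have : #|pt @: F| <= #|S|.
  apply/subset_leq_card/subsetP => _ /imsetP[f fF ->].
  by move: (ptP f fF); rewrite inE => /andP[pf pZ]; apply: ZS fF pZ pf.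
by rewrite card_in_imset // leqNgt ltSF.
Qed.

Lemma has_crown_of_legs L P Q R p q r :
  L \in E -> P \in E -> Q \in E -> R \in E -> p \in L -> q \in L -> r \in L ->
  p \in P -> q \in Q -> r \in R ->
  [disjoint P & Q] -> [disjoint P & R] -> [disjoint Q & R] -> has_crown E.
Proof.
move=> LE PE QE RE pL qL rL pP qQ rR dPQ dPR dQR.
have pq := disjoint_neq dPQ pP qQ; have pr := disjoint_neq dPR pP rR.
have qr := disjoint_neq dQR qQ rR.
have [p1 [p2 [defP pp1 pp2 p12]]] := card3_set1 (card_edge PE) pP.
have [q1 [q2 [defQ qq1 qq2 q12]]] := card3_set1 (card_edge QE) qQ.
have [r1 [r2 [defR rr1 rr2 r12]]] := card3_set1 (card_edge RE) rR.
exists p, q, r, p1, p2, q1, q2, r1, r2.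
rewrite -(set3_eq (card_edge LE) pL qL rL pq pr qr) -defP -defQ -defR.
split=> //; rewrite defP defQ defR in dPQ dPR dQR.
rewrite /= !inE !negb_or; do ![apply/andP; split].
all: first [ done | rewrite eq_sym; done
  | by apply: (disjoint_neq dPQ); mem | by rewrite eq_sym; apply: (disjoint_neq dPQ); mem
  | by apply: (disjoint_neq dPR); mem | by rewrite eq_sym; apply: (disjoint_neq dPR); mem
  | by apply: (disjoint_neq dQR); mem | by rewrite eq_sym; apply: (disjoint_neq dQR); mem ].
Qed.

Lemma has_crown_of_two_legs L P Q p q r (X : {set {set V}}) (S : {set V}) :
  L \in E -> P \in E -> Q \in E -> p \in L -> q \in L -> r \in L -> p != r -> q != r ->
  p \in P -> q \in Q -> [disjoint P & Q] -> L \in X ->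
  (forall f z, f \in edges_at r :\: X -> z \in P :|: Q -> z \in f -> z \in S) ->
  #|S| < #|edges_at r :\: X| -> has_crown E.
Proof.
move=> LE PE QE pL qL rL pr qr pP qQ dPQ LX PQS ltS.
have qP : q \notin P by rewrite (disjointFl dPQ qQ).
have pQ : p \notin Q by rewrite (disjointFr dPQ pP).
have PL : P != L by apply: contraNneq qP => ->.
have QL : Q != L by apply: contraNneq pQ => ->.
have rPQ : r \notin P :|: Q.
  by rewrite inE negb_or (edge_notin PE LE PL pP pL rL pr) (edge_notin QE LE QL qQ qL rL qr).
have [R /in_edges_atD[RE rR _] dRPQ] := exists_edge_avoiding (subsetDl _ _) rPQ PQS ltS.
apply: (has_crown_of_legs LE PE QE RE pL qL rL pP qQ rR dPQ).
  by rewrite disjoint_sym (disjointWr (subsetUl P Q) dRPQ).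
by rewrite disjoint_sym (disjointWr (subsetUr P Q) dRPQ).
Qed.

Ltac neq := first
  [ done | by rewrite eq_sym
  | match goal with U : is_true (uniq _) |- _ =>
      apply: contraTneq U => ->; by rewrite /= !inE eqxx ?orbT /= ?andbF end
  | match goal with
    | H : is_true (?u \notin _) |- is_true (?u != _) => apply: contraNneq H => ->; mem
    | H : is_true (?v \notin _) |- is_true (_ != ?v) => apply: contraNneq H => <-; mem
    end ].

Ltac notin := lazymatch goal with |- is_true (~~ (_ \in ?G)) => first
  [ done
  | by rewrite !inE ?negb_or; do ?[apply/andP; split]; neq
  | match goal with gF : is_true (?g \in ?A) |- _ =>
      match G with context [g] => match A with context [edges_at] =>
      match goal with hE : is_true (?h \in ?B) |- _ =>
        match A with context [h] => match B with context [E] =>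
        by apply: (edges_atD_notin gF _ hE); first [mem | neq] end end end end end end
  | match goal with d : is_true [disjoint ?g & _] |- _ =>
      match G with context [g] => by rewrite (disjointFl d) ?inE ?eqxx ?orbT end end ] end.

Ltac side := lazymatch goal with
  | |- is_true (~~ (_ \in _)) => notin
  | |- is_true (_ != _) => first
    [ neq
    | match goal with H : is_true (_ \in ?A) |- is_true (?f != _) =>
        match A with context [f] => by apply: contraTneq H => ->; notin end end ]
  | |- is_true [disjoint _ & _] => by apply: disjoint_set3; notin
  | |- is_true (uniq _) => by rewrite /= !inE ?negb_or; do ?[apply/andP; split]; neq
  | |- is_true (_ \in _) => mem
  | |- _ => done
  end.

Hypothesis crown_freeE : ~ has_crown E.

Lemma legs_meet L M P Q p q r :
  L \in E -> M \in E -> P \in E -> Q \in E -> p \in L -> q \in L -> r \in L ->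
  r \in M -> p \in P -> q \in Q -> [disjoint P & M] -> [disjoint Q & M] ->
  ~~ [disjoint P & Q].
Proof.
move=> LE ME PE QE pL qL rL rM pP qQ dPM dQM; apply/negP => dPQ.
by apply: crown_freeE; apply: (has_crown_of_legs LE PE QE ME pL qL rL pP qQ rM).
Qed.

Lemma edge_not_heavy f p q r : f \in E -> p \in f -> q \in f -> r \in f ->
  p != q -> p != r -> q != r -> ~~ heavy (deg p) (deg q) (deg r).
Proof.
move=> fE pf qf rf pq pr qr; apply/and3P=> -[dp dq dr].
have f1 : f \in [set f] := set11 f.
have [P PF] : exists P, P \in edges_at p :\: [set f].
  by apply/card_gt0P; apply: leq_trans (leq_degree_edges_atD _ _); rewrite cards1 subn_gt0.
have [PE pP _] := in_edges_atD PF.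
have qP : q \notin P by notin.
have [Q QF dQP] : exists2 Q, Q \in edges_at q :\: [set f] & [disjoint Q & P].
  apply: (exists_edge_avoiding (S := P :\ p) (subsetDl _ _) qP).
    by move=> g z gF zP zg; rewrite !inE zP andbT; apply: contraTneq zg => ->; notin.
  by rewrite (card_edgeD1 PE pP); apply: (ltn_card_edges_atD (eq_leq (cards1 f))).
have [QE qQ _] := in_edges_atD QF.
apply: crown_freeE.
apply: (has_crown_of_two_legs (S := (P :\ p) :|: (Q :\ q)) fE PE QE pf qf rf pr qr pP qQ _ f1).
- by rewrite disjoint_sym.
- move=> g z gF; rewrite !inE => /orP[] zPQ zg; rewrite zPQ andbT; apply/orP;
    [left | right]; by apply: contraTneq zg => ->; notin.
- apply: leq_ltn_trans (leq_card_setU _ _).1 _.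
  rewrite (card_edgeD1 PE pP) (card_edgeD1 QE qQ).
  by apply: (ltn_card_edges_atD (eq_leq (cards1 f))).
Qed.

(* Otherwise a leg at p avoiding M, the leg M at q and a leg at r avoiding both would
   form a crown around L. *)
Lemma exists_edge_joining L M p q r z : L \in E -> M \in E ->
  p \in L -> q \in L -> r \in L -> p != q -> p != r -> q != r ->
  q \in M -> z \in M -> z \notin L -> 4 <= deg p -> 5 <= deg r ->
  exists C, [/\ C \in E, r \in C & z \in C].
Proof.
move=> LE ME pL qL rL pq pr qr qM zM zL dp dr.
have qz : q != z by neq.
have [z' [defM qz' zz']] := card3_set2 (card_edge ME) qM zM qz.
subst M; have L1 : L \in [set L] := set11 L.
have z'L : z' \notin L by apply: (edge_notin_third ME LE (u := q) (v := z)); side.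
have [P PF dPZ] : exists2 P, P \in edges_at p :\: [set L] & [disjoint P & [set z; z']].
  apply: (exists_edge_avoiding (S := [set z; z']) (subsetDl _ _)) => //; first by notin.
  apply: leq_ltn_trans (leq_card_set2 z z') _.
  exact: (ltn_card_edges_atD (eq_leq (cards1 L))).
have [PE pP _] := in_edges_atD PF.
have [/existsP[C /and3P[CE rC zC]] | /existsPn noC] :=
  boolP [exists C, [&& C \in E, r \in C & z \in C]]; first by exists C.
case: crown_freeE.
apply: (has_crown_of_two_legs (S := (P :\ p) :|: [set z']) LE PE ME pL qL rL pr qr pP qM _ L1).
- by apply: disjoint_set3; notin.
- move=> g t gF; rewrite !inE => /orP[tP | tM] tg.
    by rewrite tP andbT; apply/orP; left; apply: contraTneq tg => ->; notin.
  have [gE rg _] := in_edges_atD gF.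
  move: tM => /orP[/orP[] | ] /eqP et; subst t; rewrite ?eqxx ?orbT //.
    by exfalso; move: tg; apply/negP; notin.
  by move: (noC g); rewrite gE rg tg.
- apply: leq_ltn_trans (leq_card_setU _ _).1 _; rewrite (card_edgeD1 PE pP) cards1.
  exact: (ltn_card_edges_atD (eq_leq (cards1 L))).
Qed.

(* Otherwise [set a; x; x3] and [set c; y; y2] are disjoint legs of [set a; b; c], and b has
   a third leg, since the vertices x and y already sit on the edge [set b; x; y]. *)
Lemma pasch_meet a b c x y x3 y2 :
  [set a; b; c] \in E -> [set b; x; y] \in E ->
  [set a; x; x3] \in E -> [set c; y; y2] \in E ->
  uniq [:: a; b; c; x; y] -> 5 <= deg b -> y2 = x3.
Proof.
move=> eE BE AxE CyE U db; apply/eqP; apply: contraT => y2x3.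
have [_ ax3 xx3] := edge_set3_neq AxE.
have [_ cy2 yy2] := edge_set3_neq CyE.
have x3e : x3 \notin [set a; b; c] by apply: (edge_notin_third AxE eE (u := a) (v := x)); side.
have x3B : x3 \notin [set b; x; y] by apply: (edge_notin_third AxE BE (u := x) (v := a)); side.
have y2e : y2 \notin [set a; b; c] by apply: (edge_notin_third CyE eE (u := c) (v := y)); side.
have y2B : y2 \notin [set b; x; y] by apply: (edge_notin_third CyE BE (u := y) (v := c)); side.
case: crown_freeE.
apply: (has_crown_of_two_legs (X := [set [set a; b; c]; [set b; x; y]]) (S := [set x3; y2])
  eE AxE CyE (p := a) (q := c) (r := b)); try side.
- move=> g t gF; rewrite !inE -!orbA => tAC tg.
  move: tAC; do ?case/orP; move=> /eqP et; subst t; rewrite ?eqxx ?orbT //.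
  all: by exfalso; move: tg; apply/negP; notin.
- apply: leq_ltn_trans (leq_card_set2 x3 y2) _.
  exact: (ltn_card_edges_atD (leq_card_set2 _ _)).
Qed.

Lemma exists_two_edges_atD v (X : {set {set V}}) k : #|X| <= k -> k.+2 <= deg v ->
  exists f1 f2, [/\ f1 \in edges_at v :\: X, f2 \in edges_at v :\: X & f1 != f2].
Proof. by move=> Xk dv; apply/card_gt1P; apply: (ltn_card_edges_atD Xk); rewrite add1n. Qed.

Section Grid.

Variables (C1 C2 D1 D2 : {set V}) (c x u1 u2 w1 w2 : V).
Hypotheses (C1E : C1 \in E) (C2E : C2 \in E) (D1E : D1 \in E) (D2E : D2 \in E).
Hypotheses (C12 : C1 != C2) (D12 : D1 != D2).
Hypotheses (cC1 : c \in C1) (cC2 : c \in C2) (xD1 : x \in D1) (xD2 : x \in D2).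
Hypotheses (cD1 : c \notin D1) (cD2 : c \notin D2) (xC1 : x \notin C1) (xC2 : x \notin C2).
Hypotheses (u1C1 : u1 \in C1) (u1D1 : u1 \in D1) (u2C1 : u2 \in C1) (u2D2 : u2 \in D2).
Hypotheses (w1C2 : w1 \in C2) (w1D1 : w1 \in D1) (w2C2 : w2 \in C2) (w2D2 : w2 \in D2).

Definition grid_transversal (X : {set V}) :=
  [/\ X \in E, c \notin X, X \notin [set D1; D2], ~~ [disjoint X & C1] & ~~ [disjoint X & C2]].

Let C_neq u w : u \in C1 -> w \in C2 -> c != u -> u != w.
Proof.
move=> uC1 wC2 cu; apply: contraNneq C12 => uw.
by apply/eqP; apply: (edge_eq C1E C2E cC1 uC1 cC2) => //; rewrite uw.
Qed.

Let D_neq u w : u \in D1 -> w \in D2 -> x != u -> u != w.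
Proof.
move=> uD1 wD2 xu; apply: contraNneq D12 => uw.
by apply/eqP; apply: (edge_eq D1E D2E xD1 uD1 xD2) => //; rewrite uw.
Qed.

Lemma grid_transversal_diag X :
  grid_transversal X -> (u1 \in X /\ w2 \in X) \/ (u2 \in X /\ w1 \in X).
Proof.
case=> XE cX; rewrite !inE negb_or => /andP[XD1 XD2].
move=> /not_disjointP[s sX sC1] /not_disjointP[t tX tC2].
have cu1 : c != u1 by neq.
have cw1 : c != w1 by neq.
have u1w1 := C_neq u1C1 w1C2 cu1.
have u2w2 : u2 != w2 by apply: C_neq => //; neq.
rewrite (set3_eq (card_edge C1E) cC1 u1C1 u2C1 cu1 _ (D_neq u1D1 u2D2 _)) ?inE in sC1; try neq.
rewrite (set3_eq (card_edge C2E) cC2 w1C2 w2C2 cw1 _ (D_neq w1D1 w2D2 _)) ?inE in tC2; try neq.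
move: sC1 tC2 => /orP[/orP[] | ] /eqP es /orP[/orP[] | ] /eqP et; subst s t.
all: first [ by rewrite sX in cX | by rewrite tX in cX | by left | by right
  | by case/negP: XD1; apply/eqP; apply: (edge_eq XE D1E sX tX)
  | by case/negP: XD2; apply/eqP; apply: (edge_eq XE D2E sX tX) ].
Qed.

Lemma grid_transversals_le2 (T : {set {set V}}) : {in T, forall X, grid_transversal X} -> #|T| <= 2.
Proof.
move=> trT; rewrite leqNgt; apply/card_gt2P => -[X1 [X2 [X3 [[X1T X2T X3T] [X12 X23 X31]]]]].
have t1 := trT X1 X1T; have t2 := trT X2 X2T; have t3 := trT X3 X3T.
have X13 : X1 != X3 by rewrite eq_sym.
have u1w2 : u1 != w2 by apply: C_neq => //; neq.
have u2w1 : u2 != w1 by apply: C_neq => //; neq.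
have share2 (Y Z : {set V}) u w : Y \in E -> Z \in E -> Y != Z -> u != w ->
    u \in Y -> w \in Y -> u \in Z -> w \in Z -> False.
  move=> YE ZE YZ uw uY wY uZ wZ.
  by case/negP: YZ; apply/eqP; apply: (edge_eq YE ZE uY wY uZ wZ uw).
case: (t1) (t2) (t3) => [X1E _ _ _ _] [X2E _ _ _ _] [X3E _ _ _ _].
move: (grid_transversal_diag t1) (grid_transversal_diag t2) (grid_transversal_diag t3).
move=> [[? ?] | [? ?]] [[? ?] | [? ?]] [[? ?] | [? ?]].
all: first [ exact: (share2 _ _ _ _ X1E X2E X12 u1w2)
  | exact: (share2 _ _ _ _ X1E X3E X13 u1w2) | exact: (share2 _ _ _ _ X2E X3E X23 u1w2)
  | exact: (share2 _ _ _ _ X1E X2E X12 u2w1) | exact: (share2 _ _ _ _ X1E X3E X13 u2w1)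
  | exact: (share2 _ _ _ _ X2E X3E X23 u2w1) ].
Qed.

End Grid.

(* Two further edges C1, C2 at c and D1, D2 at x meet pairwise, since [set b; x2; x3] is a
   leg at x2 avoiding them; the unused edges at b and at y yield three transversals of
   this grid. *)
Lemma no_dense_fano_minus_line a b c x y x2 x3 :
  [set a; b; c] \in E -> [set b; x; y] \in E -> [set c; x; x2] \in E ->
  [set a; x; x3] \in E -> [set c; y; x3] \in E -> [set b; x2; x3] \in E ->
  uniq [:: a; b; c; x; y; x2; x3] ->
  5 <= deg b -> 5 <= deg c -> 5 <= deg x -> 4 <= deg y -> False.
Proof.
move=> eE BE CxE AxE CyE BxE U db dc dx dy.
have [C1 [C2 [C1F C2F C12]]] :=
  exists_two_edges_atD (leq_card_set3 [set a; b; c] [set c; x; x2] [set c; y; x3]) dc.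
have [D1 [D2 [D1F D2F D12]]] :=
  exists_two_edges_atD (leq_card_set3 [set b; x; y] [set c; x; x2] [set a; x; x3]) dx.
have [b1 [b2 [b1F b2F b12]]] :=
  exists_two_edges_atD (leq_card_set3 [set a; b; c] [set b; x; y] [set b; x2; x3]) db.
have [Y YF dYa] : exists2 Y, Y \in edges_at y :\: [set [set b; x; y]; [set c; y; x3]]
    & [disjoint Y & [set a]].
  apply: (exists_edge_avoiding (S := [set a]) (subsetDl _ _)) => //; first by side.
  by rewrite cards1; apply: (ltn_card_edges_atD (leq_card_set2 _ _)).
have [C1E cC1 _] := in_edges_atD C1F; have [C2E cC2 _] := in_edges_atD C2F.
have [D1E xD1 _] := in_edges_atD D1F; have [D2E xD2 _] := in_edges_atD D2F.
have [_ bb1 _] := in_edges_atD b1F; have [_ bb2 _] := in_edges_atD b2F.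
have [YE yY _] := in_edges_atD YF.
have grid_meet C D : C \in [set C1; C2] -> D \in [set D1; D2] -> exists2 u, u \in C & u \in D.
  rewrite !inE => /orP[] /eqP-> /orP[] /eqP->; apply/not_disjointP;
    by apply: (legs_meet CxE BxE (p := c) (q := x) (r := x2)); side.
have [u1 u1C1 u1D1] := grid_meet C1 D1 (set21 _ _) (set21 _ _).
have [u2 u2C1 u2D2] := grid_meet C1 D2 (set21 _ _) (set22 _ _).
have [w1 w1C2 w1D1] := grid_meet C2 D1 (set22 _ _) (set21 _ _).
have [w2 w2C2 w2D2] := grid_meet C2 D2 (set22 _ _) (set22 _ _).
have transversal_b g :
    g \in edges_at b :\: [set [set a; b; c]; [set b; x; y]; [set b; x2; x3]] ->
    grid_transversal C1 C2 D1 D2 c g.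
  move=> gF; have [gE bg _] := in_edges_atD gF.
  split; [done | side | by rewrite !inE negb_or; apply/andP; split; side | |];
    by apply: (legs_meet eE AxE (p := b) (q := c) (r := a)); side.
have transversal_Y : grid_transversal C1 C2 D1 D2 c Y.
  split; [done | side | by rewrite !inE negb_or; apply/andP; split; side | |];
    by apply: (legs_meet CyE AxE (p := y) (q := c) (r := x3)); side.
suff: #|[set b1; b2; Y]| <= 2.
  have [b1Y b2Y] : b1 != Y /\ b2 != Y by split; side.
  by rewrite -setUA !cardsU1 cards1 !inE negb_or b12 b1Y b2Y.
apply: (grid_transversals_le2 (C1 := C1) (C2 := C2) (D1 := D1) (D2 := D2) (c := c) (x := x)
  (u1 := u1) (u2 := u2) (w1 := w1) (w2 := w2)); try side.
by move=> X; rewrite !inE => /orP[/orP[] | ] /eqP->; [apply: transversal_b.. | ].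
Qed.

(* The edges joining the two triples close up into a Fano plane minus the line
   {a, y, x2}. *)
Lemma no_dense_special_pair a b c x y :
  [set a; b; c] \in E -> [set b; x; y] \in E -> uniq [:: a; b; c; x; y] ->
  4 <= deg a -> 5 <= deg b -> 5 <= deg c -> 5 <= deg x -> 4 <= deg y -> False.
Proof.
move=> eE BE U da db dc dx dy.
have [Cx [CxE cCx xCx]] : exists C, [/\ C \in E, c \in C & x \in C].
  by apply: (exists_edge_joining eE BE (p := a) (q := b)); side.
have [Cy [CyE cCy yCy]] : exists C, [/\ C \in E, c \in C & y \in C].
  by apply: (exists_edge_joining eE BE (p := a) (q := b)); side.
have [Ax [AxE xAx aAx]] : exists C, [/\ C \in E, x \in C & a \in C].
  by apply: (exists_edge_joining BE eE (p := y) (q := b)); side.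
have [x2 [defCx cx2 xx2]] := card3_set2 (card_edge CxE) cCx xCx ltac:(side); subst Cx.
have [x3 [defAx ax3 xx3]] := card3_set2 (card_edge AxE) aAx xAx ltac:(side); subst Ax.
have [y2 [defCy cy2 yy2]] := card3_set2 (card_edge CyE) cCy yCy ltac:(side); subst Cy.
have x2e : x2 \notin [set a; b; c] by apply: (edge_notin_third CxE eE (u := c) (v := x)); side.
have x2B : x2 \notin [set b; x; y] by apply: (edge_notin_third CxE BE (u := x) (v := c)); side.
have x3e : x3 \notin [set a; b; c] by apply: (edge_notin_third AxE eE (u := a) (v := x)); side.
have x3B : x3 \notin [set b; x; y] by apply: (edge_notin_third AxE BE (u := x) (v := a)); side.
have x3Cx : x3 \notin [set c; x; x2] by apply: (edge_notin_third AxE CxE (u := x) (v := a)); side.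
have y2x3 := pasch_meet eE BE AxE CyE U db; subst y2.
have [Bx [BxE bBx x2Bx]] : exists C, [/\ C \in E, b \in C & x2 \in C].
  by apply: (exists_edge_joining eE CxE (p := a) (q := c)); side.
have [r0 [defBx br0 x2r0]] := card3_set2 (card_edge BxE) bBx x2Bx ltac:(side); subst Bx.
have r0x3 : r0 = x3.
  have CxE' : [set x; c; x2] \in E by rewrite set3C.
  have eE' : [set c; a; b] \in E by rewrite set3_rotl.
  have AxE' : [set x; a; x3] \in E by rewrite set3C.
  have BxE' : [set x2; b; r0] \in E by rewrite set3C.
  exact: (pasch_meet CxE' eE' AxE' BxE' ltac:(side) dc).
subst r0; exact: (no_dense_fano_minus_line eE BE CxE AxE CyE BxE ltac:(side) db dc dx dy).
Qed.

Definition special_edge (f : {set V}) (v : V) : bool :=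
  [exists u in f, exists w in f, [&& u != v, w != v, u != w, deg u == 5 & 4 <= deg w <= 5]].

Definition weight (f : {set V}) (v : V) : nat := charge (deg v) (special_edge f v).

Lemma special_edgeE f v u w : f \in E -> v \in f -> u \in f -> w \in f ->
  v != u -> v != w -> u != w -> special_edge f v = special (deg u) (deg w).
Proof.
move=> fE vf uf wf vu vw uw; rewrite (set3_eq (card_edge fE) vf uf wf vu vw uw).
apply/idP/idP => [/exists_inP[u' u'f /exists_inP[w' w'f /and5P[u'v w'v u'w' du' dw']]] | ].
- move: u'f w'f; rewrite !inE => /orP[/orP[] | ] /eqP eu /orP[/orP[] | ] /eqP ew; subst u' w'.
  all: first [ by rewrite eqxx in u'v | by rewrite eqxx in w'v | by rewrite eqxx in u'w'
             | by rewrite /special du' dw' ?orbT ].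
- case/orP=> /andP[du dw]; apply/exists_inP.
  + exists u; first by mem.
    by apply/exists_inP; exists w; [mem | rewrite du dw !andbT; apply/and3P; split; side].
  + exists w; first by mem.
    by apply/exists_inP; exists u; [mem | rewrite du dw !andbT; apply/and3P; split; side].
Qed.

Lemma special_edge_uniq v f1 f2 : deg v = 5 -> f1 \in edges_at v -> f2 \in edges_at v ->
  special_edge f1 v -> special_edge f2 v -> f1 = f2.
Proof.
rewrite !inE => dv /andP[f1E vf1] /andP[f2E vf2].
move=> /exists_inP[u1 u1f /exists_inP[w1 w1f /and5P[u1v w1v u1w1 /eqP du1 /andP[dw1 _]]]].
move=> /exists_inP[u2 u2f /exists_inP[w2 w2f /and5P[u2v w2v u2w2 /eqP du2 /andP[dw2 _]]]].
apply/eqP; apply: contraT => f12.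
have u2f1 := edge_notin f1E f2E f12 vf1 vf2 u2f ltac:(side).
have w2f1 := edge_notin f1E f2E f12 vf1 vf2 w2f ltac:(side).
have f1_def := set3_eq (card_edge f1E) w1f vf1 u1f ltac:(side) ltac:(side) ltac:(side).
have f2_def := set3_eq (card_edge f2E) vf2 u2f w2f ltac:(side) ltac:(side) u2w2.
rewrite f1_def in f1E u2f1 w2f1; rewrite f2_def in f2E.
exfalso; apply: (no_dense_special_pair f1E f2E); rewrite ?dv ?du1 ?du2 //; side.
Qed.

Lemma vertex_charge_le v : \sum_(f in edges_at v) weight f v <= 180 * (deg v < 6).
Proof.
rewrite /weight; have [dv5 | dv_ne5] := eqVneq (deg v) 5; last first.
  rewrite (eq_bigr (fun=> charge (deg v) false)) => [|f _]; last first.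
    by case: (deg v) dv_ne5 => [|[|[|[|[|[|]]]]]].
  rewrite sum_nat_const; change #|edges_at v| with (deg v).
  by case: (deg v) dv_ne5 => [|[|[|[|[|[|d]]]]]] //; rewrite muln0.
rewrite dv5 /=.
have [/exists_inP[f0 f0v sp0] | none] := boolP [exists f in edges_at v, special_edge f v].
  rewrite (bigD1 f0) //= sp0 (eq_bigr (fun=> 30)) => [|f /andP[fv ff0]]; last first.
    by case: ifP => // spf; rewrite (special_edge_uniq dv5 fv f0v spf sp0) eqxx in ff0.
  rewrite (eq_bigl (mem (edges_at v :\ f0))) => [|f]; last by rewrite !inE andbC.
  rewrite sum_nat_const; have := cardsD1 f0 (edges_at v).
  by rewrite f0v -[#|edges_at v|]/(deg v) dv5 add1n => -[<-].
rewrite (eq_bigr (fun=> 30)) => [|f fv]; last first.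
  by case: ifP => // spf; case/exists_inP: none; exists f.
by rewrite sum_nat_const; change #|edges_at v| with (deg v); rewrite dv5.
Qed.

Lemma edge_charge_ge f : f \in E -> 120 <= \sum_(v in f) weight f v.
Proof.
move=> fE; have [p pf] : exists p, p \in f by apply/card_gt0P; rewrite card_edge.
have [q [r [fdef pq pr qr]]] := card3_set1 (card_edge fE) pf.
have qf : q \in f by rewrite fdef; mem.
have rf : r \in f by rewrite fdef; mem.
have -> : \sum_(v in f) weight f v = weight f p + weight f q + weight f r.
  rewrite {1}fdef -setUA big_setU1 /=; last by side.
  by rewrite big_setU1 /= ?big_set1 ?addnA //; side.
have [qp rp rq] : [/\ q != p, r != p & r != q] by split; rewrite eq_sym.
rewrite /weight (special_edgeE fE pf qf rf pq pr qr) (special_edgeE fE qf pf rf qp qr pr).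
rewrite (special_edgeE fE rf pf qf rp rq pq).
apply: charge_sum_ge; try exact: (degree_gt0 fE).
all: by apply: (edge_not_heavy fE); side.
Qed.

End LinearHypergraph.

Theorem theorem1p1 (V : finType) (E : {set {set V}}) :
  is_linear_3graph E -> crown_free E ->
  2 * #|E| <= 3 * (#|V| - #|[set v : V | 6 <= degree E v]|).
Proof.
move=> linE crown_freeE; set H := [set v : V | 6 <= degree E v].
have edges_le : 120 * #|E| <= \sum_(f in E) \sum_(v in f) weight E f v.
  by rewrite mulnC -sum_nat_const; apply: leq_sum => f; apply: edge_charge_ge.
have double_count :
    \sum_(f in E) \sum_(v in f) weight E f v = \sum_v \sum_(f in edges_at E v) weight E f v.
  rewrite (exchange_big_dep predT) //=; apply: eq_bigr => v _.
  by apply: eq_bigl => f; rewrite inE.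
have vertices_le : \sum_v \sum_(f in edges_at E v) weight E f v <= 180 * #|~: H|.
  apply: (@leq_trans (\sum_v 180 * (degree E v < 6))).
    by apply: leq_sum => v _; apply: vertex_charge_le.
  rewrite -big_distrr -sum1_card leq_mul2l /=; apply: eq_leq; rewrite [RHS]big_mkcond.
  by apply: eq_bigr => v _; rewrite !inE -ltnNge; case: (_ < 6).
rewrite -(cardsC H) addKn -(leq_pmul2l (isT : 0 < 60)) !mulnA.
by apply: leq_trans edges_le _; rewrite double_count.
Qed.
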